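(* Let $X$ be a nonempty set, $f:X\to X$ a one-to-one function, $x_0\in X$, $k\in\mathbb{N}$, and $\tau_3$ the fuzzy topology on $X$ defined below. Then $f:(X,\tau_3)\to(X,\tau_3)$ is open if and only if $f$ is onto.
   Context: A fuzzy subset of $X$ is a function $\mu:X\to[0,1]$; union is the pointwise supremum, intersection the pointwise minimum; $\emptyset$ is the constant $0$ and $X$ the constant $1$. A fuzzy topology is a family of fuzzy subsets containing $\emptyset$ and $X$, closed under arbitrary unions and finite intersections; the topology generated by a base $\mathbb{B}$ consists of $\emptyset$ and all unions of subfamilies of $\mathbb{B}$. $\mathbb{N}=\{1,2,\dots\}$. Powers: $f^0=\mathrm{id}_X$, $f^{n+1}=f^n\circ f$ for $n\ge0$; for $n<0$, $f^n(x_0)$ denotes (when it exists) the unique $y$ with $f^{-n}(y)=x_0$ (unique since $f$ is injective). Definition of $\tau_3$: $A(x_0)$ is the set of all points $f^n(x_0)$, $n\in\mathbb{Z}$, that are defined; $N_0=\{n\in\mathbb{Z}: f^n(x_0)\text{ is defined and lies in }A(x_0)\}$. Let $C$ be the fuzzy set with $\mu_C(x)=1$ for $x\in X\setminus A(x_0)$ and $\mu_C(x)=0$ for $x\in A(x_0)$. For $n\in N_0$ let $\mu_{C_n}(x)=1$ if $x=f^n(x_0)$, $\mu_{C_n}(x)=1/k$ if $x\in A(x_0)$ and $x\neq f^n(x_0)$, and $\mu_{C_n}(x)=0$ otherwise. $\tau_3$ is generated by the base $\{C\}\cup\{C_n:n\in N_0\}$. The image of a fuzzy set $A$ is $\mu_{f(A)}(y)=\sup\{\mu_A(x):f(x)=y\}$,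 and $0$ if $y\notin f(X)$; $f$ is open if $f(U)$ is open for every open fuzzy set $U$. *)

(* fuzzy subsets of X are functions X -> R (values in [0,1]). *)
From Stdlib Require Import Reals ZArith.
Open Scope R_scope.

Definition fuzzy (X : Type) := X -> R.

(* f^n(x0) = y, for n : Z (for n < 0: the unique y with f^(-n)(y) = x0). *)
Definition fpow_is {X : Type} (f : X -> X) (n : Z) (x0 y : X) : Prop :=
  if (0 <=? n)%Z then y = Nat.iter (Z.to_nat n) f x0
  else Nat.iter (Z.to_nat (- n)) f y = x0.

Definition orbitA {X : Type} (f : X -> X) (x0 : X) (x : X) : Prop :=
  exists n : Z, fpow_is f n x0 x.

Definition is_C {X : Type} (f : X -> X) (x0 : X) (U : fuzzy X) : Prop :=
  forall x, (~ orbitA f x0 x -> U x = 1) /\ (orbitA f x0 x -> U x = 0).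

Definition is_Cn {X : Type} (f : X -> X) (x0 : X) (k : nat) (y : X)
  (U : fuzzy X) : Prop :=
  forall x, (x = y -> U x = 1)
         /\ (orbitA f x0 x -> x <> y -> U x = 1 / INR k)
         /\ (~ orbitA f x0 x -> U x = 0).

Definition base3 {X : Type} (f : X -> X) (x0 : X) (k : nat) (U : fuzzy X) : Prop :=
  is_C f x0 U \/
  exists (n : Z) (y : X), fpow_is f n x0 y /\ orbitA f x0 y /\ is_Cn f x0 k y U.

(* U is the union (pointwise supremum) of the family F; the empty union is
   the constant 0 (adding 0 to the set does not change the sup of a nonempty
   family of [0,1]-valued fuzzy sets). *)
Definition fuzzy_union {X : Type} (F : fuzzy X -> Prop) (U : fuzzy X) : Prop :=
  forall x, is_lub (fun r => r = 0 \/ exists V, F V /\ r = V x) (U x).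

Definition tau3_open {X : Type} (f : X -> X) (x0 : X) (k : nat) (U : fuzzy X) : Prop :=
  (forall x, U x = 0) \/
  exists F : fuzzy X -> Prop, (forall V, F V -> base3 f x0 k V) /\ fuzzy_union F U.

Definition fuzzy_image {X : Type} (f : X -> X) (A B : fuzzy X) : Prop :=
  forall y, is_lub (fun r => r = 0 \/ exists x, f x = y /\ r = A x) (B y).

Definition tau3_open_map {X : Type} (f : X -> X) (x0 : X) (k : nat) : Prop :=
  forall U B, tau3_open f x0 k U -> fuzzy_image f U B -> tau3_open f x0 k B.

(* An open set of tau_3 is a union of base sets, each of which is positive
   either exactly on the orbit A(x0) ([C_n]) or exactly off it ([C]); so the
   support of every open set is saturated by the partition {A(x0), X \ A(x0)}.
   Since f maps A(x0) and its complement into themselves, the image of X, i.e.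
   the indicator of f(X), is open only if f(X) contains each part it meets;
   as f(X) meets every part that is nonempty, f is onto. Conversely, for a bijection f with inverse g, the image
   of U is U o g, and precomposition with g permutes the base:
   [C o g = C] and [C_y o g = C_(f y)]. *)
From Stdlib Require Import Reals ZArith.
From Stdlib Require Import Lia Lra Classical ClassicalDescription ClassicalEpsilon.
Open Scope R_scope.

Lemma is_lub_ext (P Q : R -> Prop) m :
  (forall r, P r <-> Q r) -> is_lub P m -> is_lub Q m.
Proof.
  intros HPQ [Hub Hleast]. split.
  - intros r Hr. apply Hub, HPQ, Hr.
  - intros b Hb. apply Hleast. intros r Hr. apply Hb, HPQ, Hr.
Qed.

Section FuzzyUnion.
Variables (X : Type) (F : fuzzy X -> Prop) (U : fuzzy X).
Hypothesis HU : fuzzy_union F U.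

Lemma fuzzy_union_ge0 x : 0 <= U x.
Proof. apply (proj1 (HU x)). now left. Qed.

Lemma fuzzy_union_pos x : 0 < U x -> exists V, F V /\ 0 < V x.
Proof.
  intros Hpos. apply NNPP. intros Hnone.
  enough (U x <= 0) by lra.
  apply (proj2 (HU x)). intros r [-> | [V [HV ->]]]; [lra |].
  apply Rnot_lt_le. intros HVx. apply Hnone. now exists V.
Qed.

End FuzzyUnion.

Lemma fuzzy_union_const1 (X : Type) (F : fuzzy X -> Prop) :
  (forall V x, F V -> V x <= 1) -> (forall x, exists V, F V /\ V x = 1) ->
  fuzzy_union F (fun _ => 1).
Proof.
  intros Hle Hcover x. split.
  - intros r [-> | [V [HV ->]]]; [lra | now apply Hle].
  - intros b Hb. apply Hb. right. destruct (Hcover x) as [V [HV HVx]].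
    exists V. now rewrite HVx.
Qed.

Definition range_indicator {X : Type} (f : X -> X) : fuzzy X :=
  fun y => if excluded_middle_informative (exists x, f x = y) then 1 else 0.

Lemma fuzzy_image_const1 (X : Type) (f : X -> X) :
  fuzzy_image f (fun _ => 1) (range_indicator f).
Proof.
  intros y. unfold range_indicator.
  destruct (excluded_middle_informative (exists x, f x = y)) as [[x Hx] | Hy]; split.
  - intros r [-> | [? [_ ->]]]; lra.
  - intros b Hb. apply Hb. right. now exists x.
  - intros r [-> | [x [Hx ->]]]; [lra |]. exfalso. apply Hy. now exists x.
  - intros b Hb. apply Hb. now left.
Qed.

Lemma range_indicator_pos (X : Type) (f : X -> X) y :
  0 < range_indicator f y -> exists x, f x = y.
Proof.
  unfold range_indicator.
  destruct (excluded_middle_informative (exists x, f x = y)); [easy | lra].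
Qed.

Lemma range_indicator_f (X : Type) (f : X -> X) x : range_indicator f (f x) = 1.
Proof.
  unfold range_indicator.
  destruct (excluded_middle_informative (exists x', f x' = f x)) as [| Hn]; [easy |].
  exfalso. apply Hn. now exists x.
Qed.

Lemma fuzzy_image_inverse (X : Type) (f g : X -> X) (U B : fuzzy X) :
  (forall x, g (f x) = x) -> (forall y, f (g y) = y) -> (forall x, 0 <= U x) ->
  fuzzy_image f U B -> forall y, B y = U (g y).
Proof.
  intros gK fK Hge0 HB y. apply (is_lub_u _ _ _ (HB y)). split.
  - intros r [-> | [x [<- ->]]]; [apply Hge0 | rewrite gK; lra].
  - intros b Hb. apply Hb. right. now exists (g y).
Qed.

Section Orbit.
Variables (X : Type) (f : X -> X) (x0 : X).
Hypothesis hinj : forall a b : X, f a = f b -> a = b.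

Lemma iter_inj n u v : Nat.iter n f u = Nat.iter n f v -> u = v.
Proof. induction n; simpl; intros H; auto. Qed.

Lemma orbitA_iter y :
  orbitA f x0 y <-> exists a b, Nat.iter b f y = Nat.iter a f x0.
Proof.
  split.
  - intros [n Hn]. unfold fpow_is in Hn. destruct (0 <=? n)%Z.
    + now exists (Z.to_nat n), 0%nat.
    + now exists 0%nat, (Z.to_nat (- n)).
  - intros [a [b H]]. destruct (le_lt_dec b a) as [Hba | Hab].
    + replace a with (b + (a - b))%nat in H by lia.
      rewrite Nat.iter_add in H. apply iter_inj in H.
      exists (Z.of_nat (a - b)). unfold fpow_is.
      replace (0 <=? Z.of_nat (a - b))%Z with true by (symmetry; apply Z.leb_le; lia).
      now rewrite Nat2Z.id.
    + replace b with (a + (b - a))%nat in H by lia.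
      rewrite Nat.iter_add in H. apply iter_inj in H.
      exists (- Z.of_nat (b - a))%Z. unfold fpow_is.
      replace (0 <=? - Z.of_nat (b - a))%Z with false by (symmetry; apply Z.leb_gt; lia).
      now rewrite Z.opp_involutive, Nat2Z.id.
Qed.

Lemma orbitA_f x : orbitA f x0 (f x) <-> orbitA f x0 x.
Proof.
  rewrite !orbitA_iter. split; intros [a [b H]].
  - exists a, (S b). now rewrite Nat.iter_succ_r.
  - exists (S a), b. simpl. rewrite <- H, <- Nat.iter_succ_r. reflexivity.
Qed.

Lemma orbitA_x0 : orbitA f x0 x0.
Proof. now exists 0%Z. Qed.

End Orbit.

Section Tau3.
Variables (X : Type) (f : X -> X) (x0 : X) (k : nat).
Hypothesis hk : (1 <= k)%nat.

Lemma inv_INR_pos : 0 < 1 / INR k.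
Proof. apply Rdiv_lt_0_compat; [lra | apply lt_0_INR; lia]. Qed.

Lemma inv_INR_le1 : 1 / INR k <= 1.
Proof.
  assert (Hk : 1 <= INR k) by (apply (le_INR 1); lia).
  unfold Rdiv. rewrite Rmult_1_l, <- Rinv_1. apply Rinv_le_contravar; lra.
Qed.

Definition C_fuzzy : fuzzy X :=
  fun x => if excluded_middle_informative (orbitA f x0 x) then 0 else 1.

Definition Cn_fuzzy (y : X) : fuzzy X :=
  fun x => if excluded_middle_informative (x = y) then 1
           else if excluded_middle_informative (orbitA f x0 x) then 1 / INR k else 0.

Lemma base3_C_fuzzy : base3 f x0 k C_fuzzy.
Proof.
  left. intros x. unfold C_fuzzy.
  destruct (excluded_middle_informative (orbitA f x0 x)); tauto.
Qed.

Lemma base3_Cn_fuzzy y : orbitA f x0 y -> base3 f x0 k (Cn_fuzzy y).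
Proof.
  intros Hy. right. destruct Hy as [n Hn].
  exists n, y. split; [exact Hn | split; [now exists n |]].
  intros x. unfold Cn_fuzzy.
  destruct (excluded_middle_informative (x = y)) as [-> | Hxy].
  - repeat split; try tauto. intros Hn'. exfalso. apply Hn'. now exists n.
  - destruct (excluded_middle_informative (orbitA f x0 x)); repeat split; tauto.
Qed.

Lemma base3_le1 V x : base3 f x0 k V -> V x <= 1.
Proof.
  pose proof inv_INR_le1.
  intros [HC | [n [y [_ [_ HCn]]]]].
  - destruct (HC x) as [Hoff Hon].
    destruct (classic (orbitA f x0 x)); [rewrite Hon | rewrite Hoff]; auto; lra.
  - destruct (HCn x) as [Hy [Hon Hoff]].
    destruct (classic (x = y)); [rewrite Hy; auto; lra |].
    destruct (classic (orbitA f x0 x)); [rewrite Hon | rewrite Hoff]; auto; lra.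
Qed.

Lemma tau3_open_full : tau3_open f x0 k (fun _ => 1).
Proof.
  right. exists (base3 f x0 k). split; [easy |].
  apply fuzzy_union_const1; [intros; now apply base3_le1 |].
  intros x. destruct (classic (orbitA f x0 x)) as [Hx | Hx].
  - exists (Cn_fuzzy x). split; [now apply base3_Cn_fuzzy |].
    unfold Cn_fuzzy. now destruct (excluded_middle_informative (x = x)).
  - exists C_fuzzy. split; [exact base3_C_fuzzy |].
    unfold C_fuzzy. now destruct (excluded_middle_informative (orbitA f x0 x)).
Qed.

Lemma base3_pos_transfer V x y :
  base3 f x0 k V -> (orbitA f x0 x <-> orbitA f x0 y) -> 0 < V x -> 0 < V y.
Proof.
  pose proof inv_INR_pos.
  intros [HC | [n [z [_ [_ HCn]]]]] Hxy Hx.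
  - destruct (HC x) as [_ Hon], (HC y) as [Hoff _].
    rewrite Hoff; [lra |]. intros Hy. apply Hxy in Hy. rewrite Hon in Hx; auto; lra.
  - destruct (HCn x) as [_ [_ Hoff]], (HCn y) as [Hz [Hon _]].
    assert (Hy : orbitA f x0 y).
    { apply Hxy, NNPP. intros Hnx. rewrite Hoff in Hx; auto; lra. }
    destruct (classic (y = z)); [rewrite Hz | rewrite Hon]; auto; lra.
Qed.

Lemma tau3_open_pos_transfer U x y :
  tau3_open f x0 k U -> (orbitA f x0 x <-> orbitA f x0 y) -> 0 < U x -> 0 < U y.
Proof.
  intros [H0 | [F [HF HU]]] Hxy Hx; [rewrite H0 in Hx; lra |].
  destruct (fuzzy_union_pos _ _ _ HU x Hx) as [V [HV HVx]].
  apply Rlt_le_trans with (V y).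
  - exact (base3_pos_transfer V x y (HF V HV) Hxy HVx).
  - apply (proj1 (HU y)). right. now exists V.
Qed.

Lemma tau3_open_ge0 U x : tau3_open f x0 k U -> 0 <= U x.
Proof.
  intros [H0 | [F [_ HU]]]; [rewrite H0; lra | exact (fuzzy_union_ge0 _ _ _ HU x)].
Qed.

Lemma tau3_open_ext U W :
  (forall x, W x = U x) -> tau3_open f x0 k U -> tau3_open f x0 k W.
Proof.
  intros HWU [H0 | [F [HF HU]]].
  - left. intros x. now rewrite HWU.
  - right. exists F. split; [exact HF |].
    intros x. rewrite HWU. apply HU.
Qed.

Section Inverse.
Hypothesis hinj : forall a b : X, f a = f b -> a = b.
Variable g : X -> X.
Hypothesis fK : forall y, f (g y) = y.

Lemma orbitA_inv y : orbitA f x0 (g y) <-> orbitA f x0 y.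
Proof. rewrite <- (orbitA_f _ f x0 hinj (g y)), fK. reflexivity. Qed.

Lemma base3_comp_inv V : base3 f x0 k V -> base3 f x0 k (fun x => V (g x)).
Proof.
  intros [HC | [n [y [_ [Hy HCn]]]]].
  - left. intros x. rewrite <- orbitA_inv. apply HC.
  - right. assert (Hfy : orbitA f x0 (f y)) by (apply orbitA_f; assumption).
    destruct Hfy as [m Hm].
    exists m, (f y). split; [exact Hm | split; [now exists m |]].
    intros x. destruct (HCn (g x)) as [Hyy [Hon Hoff]]. repeat split.
    + intros ->. apply Hyy, (hinj _ _ (fK _)).
    + intros Hx Hxy. apply Hon; [now apply orbitA_inv |].
      intros Heq. apply Hxy. now rewrite <- Heq.
    + intros Hx. apply Hoff. now rewrite orbitA_inv.
Qed.

Lemma tau3_open_comp_inv U : tau3_open f x0 k U -> tau3_open f x0 k (fun x => U (g x)).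
Proof.
  intros [H0 | [F [HF HU]]]; [left; intros x; apply H0 |].
  right. exists (fun W => exists V, F V /\ W = (fun x => V (g x))). split.
  - intros W [V [HV ->]]. now apply base3_comp_inv, HF.
  - intros x. apply is_lub_ext with (2 := HU (g x)). intros r. split.
    + intros [Hr | [V [HV Hr]]]; [now left |].
      right. exists (fun x => V (g x)). split; [now exists V | exact Hr].
    + intros [Hr | [W [[V [HV ->]] Hr]]]; [now left |].
      right. now exists V.
Qed.

End Inverse.

End Tau3.

Theorem theorem2p13 (X : Type) (f : X -> X) (x0 : X) (k : nat)
  (hk : (1 <= k)%nat) (hinj : forall a b : X, f a = f b -> a = b) :
  tau3_open_map f x0 k <-> (forall y : X, exists x : X, f x = y).
Proof.
  split.
  - intros Hopen y.
    assert (Hrange : tau3_open f x0 k (range_indicator f))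
      by exact (Hopen _ _ (tau3_open_full X f x0 k hk) (fuzzy_image_const1 X f)).
    (* f x0 lies in the orbit and f y lies in the same part as y. *)
    assert (Hz : exists z, orbitA f x0 (f z) <-> orbitA f x0 y).
    { destruct (classic (orbitA f x0 y)) as [Hy | Hy].
      - exists x0. split; intros _; [exact Hy | apply orbitA_f, orbitA_x0; assumption].
      - exists y. apply orbitA_f, hinj. }
    destruct Hz as [z Hz].
    apply range_indicator_pos, (tau3_open_pos_transfer X f x0 k hk _ (f z)); auto.
    rewrite range_indicator_f. lra.
  - intros Hsurj U B HU HB.
    destruct (choice (fun y x => f x = y) Hsurj) as [g fK].
    assert (gK : forall x, g (f x) = x) by (intros x; apply hinj, fK).
    apply tau3_open_ext with (fun y => U (g y)).
    + apply (fuzzy_image_inverse X f g U B gK fK); [|exact HB].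
      intros x. exact (tau3_open_ge0 X f x0 k U x HU).
    + exact (tau3_open_comp_inv X f x0 k hinj g fK U HU).
Qed.
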